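(* For every integer $g\ge1$, the number of reflective numerical semigroups of genus $g$ equals $g+1-\tau(g)$, where $\tau(g)$ is the number of positive divisors of $g$.
   Context: A numerical semigroup is a submonoid $S$ of $(\mathbb{N}_0,+)$ with finite complement; its genus is the number of elements of $\mathbb{N}_0\setminus S$. A numerical semigroup $S$ of genus $g\ge1$ is called reflective if for every $z\in\{0,1,\dots,g-1\}$ exactly one of $z$ and $z+g$ belongs to $S$. *)

From mathcomp Require Import all_boot.
Set Implicit Arguments. Unset Strict Implicit. Unset Printing Implicit Defensive.

Definition has_genus (S : nat -> bool) (g : nat) : Prop :=
  exists2 s : seq nat, uniq s & (forall x, (x \in s) = ~~ S x) /\ size s = g.

Definition numerical_semigroup (S : nat -> bool) : Prop :=
  [/\ S 0,
      (forall x y, S x -> S y -> S (x + y)) &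
      exists g, has_genus S g].

Definition reflective_of_genus (S : nat -> bool) (g : nat) : Prop :=
  [/\ numerical_semigroup S, has_genus S g, 0 < g &
      forall z, z < g -> S z != S (z + g)].

Definition tau (g : nat) : nat := size (divisors g).

(* A reflective semigroup S of genus g has exactly one of z, z + g as a gap
   for each z < g; these g gaps must be all of them, so S contains every
   x >= 2g, and S is determined by its trace on [0, g).  Let m be the least
   positive element of S below g (or m = g if there is none).  Reflection and
   closure under addition give S y = S (y - m) for m <= y < g, hence
   S = {y < g | m divides y} on [0, g); and m cannot be a proper divisor of g,
   since otherwise g would lie in S.  Conversely every m in [1, g] that is not
   a proper divisor of g defines such a semigroup, and distinct m give distinct
   semigroups.  There are g + 1 - tau(g) such m. *)

From mathcomp Require Import all_boot zify.

Set Implicit Arguments.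
Unset Strict Implicit.
Unset Printing Implicit Defensive.

Definition reflS (g m : nat) : pred nat := fun x =>
  if x < g then m %| x else if x < g + g then ~~ (m %| x - g) else true.

Definition admissible_modulus (g m : nat) : bool :=
  (0 < m <= g) && ((m == g) || ~~ (m %| g)).

Section ReflS.

Variables g m : nat.

Lemma reflS_lt x : x < g -> reflS g m x = (m %| x).
Proof. by rewrite /reflS => ->. Qed.

Lemma reflS_mid x : g <= x < g + g -> reflS g m x = ~~ (m %| x - g).
Proof. by case/andP=> gx xgg; rewrite /reflS ltnNge gx xgg. Qed.

Lemma reflS_ge x : g + g <= x -> reflS g m x.
Proof. by move=> ggx; rewrite /reflS ifF ?ifF //; lia. Qed.

Lemma reflS_add : admissible_modulus g m ->
  forall x y, reflS g m x -> reflS g m y -> reflS g m (x + y).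
Proof.
case/andP=> /andP[m_gt0 mg] m_nproper.
have add_mid x y : x < g -> g <= y -> m %| x -> reflS g m y -> reflS g m (x + y).
  move=> xg gy mx; case: (ltnP y (g + g)) => yg; last by move=> _; apply: reflS_ge; lia.
  rewrite reflS_mid ?gy // => m_ny.
  case: (ltnP (x + y) (g + g)) => xyg; last exact: reflS_ge.
  by rewrite reflS_mid; [rewrite -addnBA // dvdn_addr | lia].
move=> x y; case: (ltnP x g) => xg; case: (ltnP y g) => yg.
- rewrite (reflS_lt xg) (reflS_lt yg) => mx my.
  case: (ltnP (x + y) g) => xyg; first by rewrite reflS_lt // dvdn_add.
  case: (ltnP (x + y) (g + g)) => xygg; last exact: reflS_ge.
  rewrite reflS_mid ?xyg //; apply/negP => mxyg.
  have mg_dvd : m %| g.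
    by rewrite -(subKn xyg) dvdn_sub ?dvdn_add.
  have m_eq_g : m = g by apply/eqP; move: m_nproper; rewrite mg_dvd orbF.
  have zero_of z : z < g -> m %| z -> z = 0.
    by case: z => // z zg; rewrite gtnNdvd // m_eq_g.
  by move: xyg; rewrite (zero_of x xg mx) (zero_of y yg my) -m_eq_g leqNgt m_gt0.
- by rewrite (reflS_lt xg) => mx; apply: add_mid.
- by rewrite addnC (reflS_lt yg) => ? my; apply: add_mid.
- by move=> _ _; apply: reflS_ge; lia.
Qed.

Lemma reflS_genus : has_genus (reflS g m) g.
Proof.
exists [seq x <- iota 0 (g + g) | ~~ reflS g m x].
  by rewrite filter_uniq ?iota_uniq.
split=> [x | ].
  rewrite mem_filter mem_iota add0n /=.
  by case: (ltnP x (g + g)) => xgg; rewrite ?andbT // reflS_ge.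
rewrite size_filter iotaD count_cat add0n.
have -> : iota g g = map (addn g) (iota 0 g) by rewrite -iotaDl addn0.
rewrite count_map (@eq_in_count _ _ (predC (dvdn m))); last first.
  by move=> x; rewrite mem_iota => /andP[_ xg]; rewrite /= reflS_lt.
rewrite (@eq_in_count _ (preim (addn g) _) (dvdn m)); last first.
  move=> x; rewrite mem_iota add0n => /andP[_ xg].
  by rewrite /= reflS_mid ?addKn ?negbK //; lia.
by rewrite addnC count_predC size_iota.
Qed.

Lemma reflS_reflective : admissible_modulus g m -> reflective_of_genus (reflS g m) g.
Proof.
move=> adm; have g_gt0 : 0 < g by case/andP: adm => /andP[m_gt0 mg] _; exact: leq_trans mg.
split=> //.
- split; first by rewrite reflS_lt ?dvdn0.
    exact: reflS_add.
  by exists g; apply: reflS_genus.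
- exact: reflS_genus.
- move=> z zg; rewrite reflS_lt // reflS_mid ?addnK; last by lia.
  by case: (m %| z).
Qed.

End ReflS.

Lemma reflS_dvd g a b : a < g -> reflS g a =1 reflS g b -> b %| a.
Proof. by move=> ag eq_ab; rewrite -(reflS_lt b ag) -eq_ab reflS_lt. Qed.

Lemma reflS_inj g a b : 0 < a <= g -> 0 < b <= g -> reflS g a =1 reflS g b -> a = b.
Proof.
move=> ha hb eq_ab; have eq_ba : reflS g b =1 reflS g a by move=> x; rewrite eq_ab.
case: (ltnP a g) => ag; case: (ltnP b g) => bg.
- by apply/eqP; rewrite eqn_dvd (reflS_dvd ag eq_ab) (reflS_dvd bg eq_ba).
- by move: (reflS_dvd ag eq_ab); rewrite gtnNdvd //; lia.
- by move: (reflS_dvd bg eq_ba); rewrite gtnNdvd //; lia.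
- lia.
Qed.

Section ReflectiveStructure.

Variables (g : nat) (S : nat -> bool).
Hypothesis S_refl : reflective_of_genus S g.

Let S_num : numerical_semigroup S. Proof. by case: S_refl. Qed.
Let g_gt0 : 0 < g. Proof. by case: S_refl. Qed.
Let S_reflect z : z < g -> S z != S (z + g). Proof. by case: S_refl => _ _ _; apply. Qed.

Lemma reflective_0 : S 0.
Proof. by case: S_num. Qed.

Lemma reflective_add x y : S x -> S y -> S (x + y).
Proof. by case: S_num => _ S_add _; apply: S_add. Qed.

Lemma reflective_mulnl k x : S x -> S (k * x).
Proof.
move=> Sx; elim: k => [|k IHk]; first exact: reflective_0.
by rewrite mulSn reflective_add.
Qed.

Lemma reflective_gap_g : ~~ S g.
Proof. by move: (S_reflect g_gt0); rewrite reflective_0. Qed.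

Lemma reflective_mid x : g <= x < g + g -> S x = ~~ S (x - g).
Proof.
move=> /andP[gx xgg]; have xg_lt : x - g < g by lia.
by move: (S_reflect xg_lt); rewrite subnK //; case: (S x); case: (S (x - g)).
Qed.

Lemma reflective_ge x : g + g <= x -> S x.
Proof.
case: S_refl => _ [gaps gaps_uniq [mem_gaps size_gaps]] _ _ ggx.
pose refl_gaps := [seq if S z then z + g else z | z <- iota 0 g].
have refl_gaps_uniq : uniq refl_gaps.
  rewrite map_inj_in_uniq ?iota_uniq // => a b.
  rewrite !mem_iota !add0n => /andP[_ ag] /andP[_ bg].
  by case: (S a); case: (S b) => /=; lia.
have refl_gaps_sub : {subset refl_gaps <= gaps}.
  move=> y /mapP[z]; rewrite mem_iota add0n => /andP[_ zg] ->; rewrite mem_gaps.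
  by case Sz: (S z) (S_reflect zg) => /=; [case: (S (z + g)) | rewrite Sz].
have size_le : size gaps <= size refl_gaps by rewrite size_gaps size_map size_iota.
have [_ eq_gaps] := uniq_min_size refl_gaps_uniq refl_gaps_sub size_le.
apply/negPn; rewrite -mem_gaps -eq_gaps.
apply/mapP=> -[z]; rewrite mem_iota add0n => /andP[_ zg].
by case: (S z) => /=; lia.
Qed.

Lemma reflective_shift m y : S m -> m <= y < g -> S y = S (y - m).
Proof.
move=> Sm /andP[my yg]; have y_split : y = m + (y - m) by rewrite subnKC.
apply/idP/idP => [Sy | Sym]; last by rewrite y_split reflective_add.
apply/negPn/negP => NSym.
have ymg : y - m < g by lia.
have Symg : S (y - m + g) by move: (S_reflect ymg); rewrite (negbTE NSym); case: (S _).
move: (S_reflect yg); rewrite Sy (_ : y + g = m + (y - m + g)) ?(reflective_add Sm Symg) //.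
lia.
Qed.

Lemma reflective_lt_dvd m : 0 < m <= g -> (m < g -> S m) ->
  (forall n, 0 < n < m -> ~~ S n) -> forall y, y < g -> S y = (m %| y).
Proof.
move=> /andP[m_gt0 mg] Sm min_m; elim/ltn_ind => y IHy yg.
case: (ltnP y m) => [ym | my].
  case: y ym {IHy yg} => [|y] ym; first by rewrite reflective_0 dvdn0.
  by rewrite gtnNdvd //; apply/negbTE/min_m.
have Sm' := Sm (leq_ltn_trans my yg).
by rewrite (reflective_shift Sm') ?my // IHy ?dvdn_subl //; lia.
Qed.

Lemma reflective_eq_reflS : exists2 m, admissible_modulus g m & S =1 reflS g m.
Proof.
pose P n := (0 < n <= g) && ((n == g) || S n).
have Pg : P g by rewrite /P g_gt0 leqnn eqxx.
have [m Pm min_m] := ex_minnP (ex_intro P g Pg).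
move: Pm => /andP[m_range Pm]; have /andP[m_gt0 mg] := m_range.
have Sm : m < g -> S m by move=> m_lt_g; move: Pm; rewrite ltn_eqF.
have S_dvd : forall y, y < g -> S y = (m %| y).
  apply: reflective_lt_dvd => // n /andP[n_gt0 nm]; apply/negP => Sn.
  have : P n by rewrite /P Sn orbT n_gt0 (ltnW (leq_trans nm mg)).
  by move/min_m; rewrite leqNgt nm.
exists m.
  rewrite /admissible_modulus m_range /=; case: (ltnP m g) => [m_lt_g | gm]; last first.
    by rewrite eqn_leq mg gm.
  apply/orP; right; apply: contra reflective_gap_g => /divnK <-.
  exact/reflective_mulnl/Sm.
move=> x; case: (ltnP x g) => xg; first by rewrite reflS_lt // S_dvd.
case: (ltnP x (g + g)) => xgg; last by rewrite reflective_ge // reflS_ge.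
rewrite reflective_mid ?reflS_mid ?xg // S_dvd //; lia.
Qed.

End ReflectiveStructure.

Definition admissible_moduli (g : nat) : seq nat :=
  [seq m <- iota 1 g | admissible_modulus g m].

Lemma admissible_moduli_uniq g : uniq (admissible_moduli g).
Proof. by rewrite filter_uniq ?iota_uniq. Qed.

Lemma mem_admissible_moduli g m : (m \in admissible_moduli g) = admissible_modulus g m.
Proof.
rewrite mem_filter mem_iota andb_idr // => /andP[/andP[m_gt0 mg] _]; lia.
Qed.

Lemma count_dvdn_iota g : 0 < g -> count (dvdn^~ g) (iota 1 g) = tau g.
Proof.
move=> g_gt0; rewrite -size_filter /tau; apply/perm_size/uniq_perm.
- by rewrite filter_uniq ?iota_uniq.
- exact: divisors_uniq.
move=> d; rewrite mem_filter mem_iota -dvdn_divisors //= andb_idr // add1n ltnS => dg.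
by rewrite (dvdn_gt0 g_gt0 dg) dvdn_leq.
Qed.

Lemma size_admissible_moduli g : 0 < g -> size (admissible_moduli g) = g + 1 - tau g.
Proof.
move=> g_gt0; pose dvd_g := dvdn^~ g.
have eq_adm : {in iota 1 g, admissible_modulus g =1 predU (pred1 g) (predC dvd_g)}.
  by move=> m; rewrite mem_iota /admissible_modulus => ->.
have no_both : count (predI (pred1 g) (predC dvd_g)) (iota 1 g) = 0.
  by rewrite (@eq_count _ _ pred0) ?count_pred0 // => m /=; case: eqP => // ->; rewrite /dvd_g /= dvdnn.
have one_g : count (pred1 g) (iota 1 g) = 1.
  by rewrite count_uniq_mem ?iota_uniq // mem_iota; apply/eqP; rewrite eqb1; lia.
have := count_predUI (pred1 g) (predC dvd_g) (iota 1 g).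
have := count_predC dvd_g (iota 1 g).
rewrite size_filter (eq_in_count eq_adm) no_both one_g count_dvdn_iota // size_iota.
set not_dvd := count (predC _) _; set adm := count (predU _ _) _; lia.
Qed.

Theorem mainTheorem15 (g : nat) : 1 <= g ->
  exists f : 'I_(g + 1 - tau g) -> (nat -> bool),
    [/\ forall i, reflective_of_genus (f i) g,
        forall i j, f i =1 f j -> i = j &
        forall S, reflective_of_genus S g -> exists i, f i =1 S].
Proof.
move=> g_gt0; have size_adm := size_admissible_moduli g_gt0.
pose modulus (i : 'I_(g + 1 - tau g)) := nth 0 (admissible_moduli g) i.
have adm_modulus i : admissible_modulus g (modulus i).
  by rewrite -mem_admissible_moduli mem_nth // size_adm.
exists (fun i => reflS g (modulus i)); split.
- by move=> i; apply: reflS_reflective.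
- move=> i j /reflS_inj eq_ij; apply/val_inj/eqP.
  rewrite -(nth_uniq 0 _ _ (admissible_moduli_uniq g)) ?size_adm ?ltn_ord //.
  by apply/eqP/eq_ij; [case/andP: (adm_modulus i) | case/andP: (adm_modulus j)].
- move=> S /reflective_eq_reflS [m adm_m eq_S].
  have m_index : index m (admissible_moduli g) < g + 1 - tau g.
    by rewrite -size_adm index_mem mem_admissible_moduli.
  exists (Ordinal m_index) => x.
  by rewrite /modulus nth_index ?mem_admissible_moduli // eq_S.
Qed.
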